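(* Let $(P,e)$, $P\in\mathcal{T}_k$, be a tree pattern, and let $X,Y,Y'\subseteq[k]$ be defined with respect to $(P,e)$ as below. Let $i\in X\cup Y\cup Y'$ be a non-root vertex of $P$ with $e(i)=0$, and define $e'\colon[k]\setminus\{r(P)\}\to\{0,1\}$ by $e'(i)=1$ and $e'(j)=e(j)$ for all $j\ne i$. Then $\mathcal{T}_n(P,e)=\mathcal{T}_n(P,e')$ for all $n\ge0$.
   Context: $\mathcal{T}_n$ is the set of binary trees on $n$ vertices labeled $1,\dots,n$ by the search tree property (left-subtree vertices of $i$ smaller than $i$, right-subtree vertices larger). $c_L(i),c_R(i),p(i)$: left child, right child, parent ($\varepsilon$ if nonexistent); $c_L^\ell,c_R^\ell$ denote iterates; $r(T)$ root; $L(i),R(i)$ subtrees rooted at $c_L(i),c_R(i)$. A tree pattern is $(P,e)$, $P\in\mathcal{T}_k$, $e\colon[k]\setminus\{r(P)\}\to\{0,1\}$ ($e(i)=1$: edge $(i,p(i))$ contiguous; $e(i)=0$: non-contiguous). $T\in\mathcal{T}_n$ contains $(P,e)$ if there is an injection $f\colon[k]\to[n]$ such that for every non-root $i$ of $P$: if $e(i)=1$, $f(i)$ is the left (resp. right) child of $f(p(i))$ when $i$ is the left (resp. right) child of $p(i)$; if $e(i)=0$, $f(i)\in L(f(p(i)))$ (resp. $R(f(p(i)))$) accordingly. $\mathcal{T}_n(P,e)$ is the set of $T\in\mathcal{T}_n$ avoiding $(P,e)$. For $i\in[k]$: $B_L'(i)=\{c_L^\ell(i):\ell\ge0,\ c_L^\ell(i)\text{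 exists, and } e(c_L^j(i))=1\text{ for } j=1,\dots,\ell\}$; $A_R(i)=\{a\in[k]: i=c_R^\ell(a)\text{ for some }\ell\ge0\text{ with } e(c_R^j(a))=1\text{ for } j=1,\dots,\ell\}$, and $a_R(i)$ is the topmost (closest to the root) vertex of $A_R(i)$. $B_R'(i)$, $A_L(i)$, $a_L(i)$ are defined in the same way with left and right interchanged. Then $X=\{i: c_L(i)=\varepsilon\text{ and } c_R(i)=\varepsilon\}$ (the leaves); $Y$ is the set of $i$ such that: $c_L(i)\ne\varepsilon$; $i=c_R(p(i))$; $A_R(p(i))=\{p(i)\}$ or $B_L'(i)=\{i\}$; $c_L(j)=\varepsilon$ for all $j\in A_R(p(i))$; $c_R(j)=\varepsilon$ for all $j\in B_L'(i)$; and $a_R(p(i))=r(P)$ or $e(a_R(p(i)))=0$; $Y'$ is the set of $i$ such that: $c_R(i)\ne\varepsilon$; $i=c_L(p(i))$; $A_L(p(i))=\{p(i)\}$ or $B_R'(i)=\{i\}$; $c_R(j)=\varepsilon$ for all $j\in A_L(p(i))$; $c_L(j)=\varepsilon$ for all $j\in B_R'(i)$; and $a_L(p(i))=r(P)$ or $e(a_L(p(i)))=0$. *)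

From mathcomp Require Import all_boot.
Set Implicit Arguments. Unset Strict Implicit. Unset Printing Implicit Defensive.

(* Unlabeled binary tree shapes.  A shape with n nodes carries a unique
   labeling by 1..n satisfying the search-tree property: the in-order
   labeling.  Hence T_n = shapes of size n, and vertices are labels in 1..n. *)
Inductive btree := BLeaf | BNode of btree & btree.

Fixpoint bsize (t : btree) : nat :=
  match t with BLeaf => 0 | BNode l r => (bsize l + bsize r).+1 end.

(* root label (0 for the empty tree, never used) *)
Definition broot (t : btree) : nat :=
  match t with BLeaf => 0 | BNode l _ => (bsize l).+1 end.

(* child on side s (false = left, true = right) of vertex i; None = epsilon *)
Fixpoint child (s : bool) (t : btree) (i : nat) : option nat :=
  match t with
  | BLeaf => None
  | BNode l r =>
      let m := (bsize l).+1 in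
      if i == m then
        (let c := if s then r else l in
         match c with
         | BLeaf => None
         | BNode _ _ => Some (if s then broot r + m else broot l)
         end)
      else if i < m then child s l i
      else omap (fun j => j + m) (child s r (i - m))
  end.

Definition cL := child false.
Definition cR := child true.

Fixpoint par (t : btree) (i : nat) : option nat :=
  match t with
  | BLeaf => None
  | BNode l r =>
      let m := (bsize l).+1 in
      if i == m then None
      else if i < m then (if i == broot l then Some m else par l i)
      else if i - m == broot r then Some m
      else omap (fun j => j + m) (par r (i - m))
  end.

Definition vertex (t : btree) (i : nat) : Prop := 1 <= i <= bsize t.

Inductive desc (t : btree) (a : nat) : nat -> Prop :=
| desc_refl : desc t a a
| desc_step : forall b c s, desc t a b -> child s t b = Some c -> desc t a c.

(* b lies in L(a) (s = false) or R(a) (s = true): subtree rooted at c_s(a) *)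
Definition in_side_sub (s : bool) (t : btree) (a b : nat) : Prop :=
  exists c, child s t a = Some c /\ desc t c b.

(* Tree pattern (P, e): e : nat -> bool, only its values on non-root vertices
   of P matter (true = contiguous edge, false = non-contiguous). *)
Definition contains (T P : btree) (e : nat -> bool) : Prop :=
  exists f : nat -> nat,
    (forall i, vertex P i -> vertex T (f i)) /\
    (forall i j, vertex P i -> vertex P j -> f i = f j -> i = j) /\
    (forall i, vertex P i -> i <> broot P ->
       forall p s, par P i = Some p -> child s P p = Some i ->
         if e i then child s T (f p) = Some (f i)
         else in_side_sub s T (f p) (f i)).

Definition avoids (T P : btree) (e : nat -> bool) : Prop := ~ contains T P e.

Definition Tn_avoid (n : nat) (P : btree) (e : nat -> bool) (T : btree) : Prop :=
  bsize T = n /\ avoids T P e.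

Fixpoint iter_child (s : bool) (t : btree) (l : nat) (i : nat) : option nat :=
  match l with
  | 0 => Some i
  | l'.+1 => obind (child s t) (iter_child s t l' i)
  end.

(* B'_s(i) : j = c_s^l(i) with e(c_s^m(i)) = 1 for m = 1..l
   (s = false gives B_L', s = true gives B_R') *)
Definition inB' (s : bool) (P : btree) (e : nat -> bool) (i j : nat) : Prop :=
  exists l, iter_child s P l i = Some j /\
    forall m, 1 <= m <= l -> exists c, iter_child s P m i = Some c /\ e c.

(* A_s(i) : a in [k] with i = c_s^l(a), e(c_s^m(a)) = 1 for m = 1..l
   (s = true gives A_R, s = false gives A_L) *)
Definition inA (s : bool) (P : btree) (e : nat -> bool) (i a : nat) : Prop :=
  vertex P a /\ exists l, iter_child s P l a = Some i /\
    forall m, 1 <= m <= l -> exists c, iter_child s P m a = Some c /\ e c.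

Definition is_top_A (s : bool) (P : btree) (e : nat -> bool) (i a : nat) : Prop :=
  inA s P e i a /\ forall b, inA s P e i b -> desc P a b.

Definition inX (P : btree) (i : nat) : Prop :=
  vertex P i /\ cL P i = None /\ cR P i = None.

(* Generic Y-set: d is the side of i's own child.  Y = Ygen false (d = left),
   Y' = Ygen true (d = right). *)
Definition inYgen (d : bool) (P : btree) (e : nat -> bool) (i : nat) : Prop :=
  vertex P i /\
  child d P i <> None /\
  exists p, par P i = Some p /\ child (~~ d) P p = Some i /\
    ((forall a, inA (~~ d) P e p a <-> a = p) \/
     (forall j, inB' d P e i j <-> j = i)) /\
    (forall j, inA (~~ d) P e p j -> child d P j = None) /\
    (forall j, inB' d P e i j -> child (~~ d) P j = None) /\
    (forall a, is_top_A (~~ d) P e p a -> a = broot P \/ e a = false).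

Definition inY := inYgen false.
Definition inY' := inYgen true.

Definition set_contig (e : nat -> bool) (i : nat) : nat -> bool :=
  fun j => if j == i then true else e j.

From mathcomp Require Import all_boot zify.
Set Implicit Arguments. Unset Strict Implicit. Unset Printing Implicit Defensive.

(* Every occurrence of (P, e') is one of (P, e), so the work is to turn an occurrence f
   of (P, e) into one of (P, e'). Vertices are located by walks: sequences of left/right
   steps.

   If i is a leaf, move i to the child of f(p(i)) on the side of i: no other vertex is
   mapped there, since its preimage would lie below p(i) on that side, hence below i.

   If i is in Y (Y' is the mirror image), consider the path
   a_R(p(i)) -R^m-> p(i) -R-> i -L^r-> b, where b ends the maximal contiguous left chain
   from i. The conditions defining Y say that the path vertices have no children off the
   path except left children of b, that m = 0 or r = 0, and that the edge into a_R(p(i))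
   is not contiguous. The image of the path under f is read along a word R^m R w L^r;
   since m = 0 or r = 0, this word contains R^m R L^r as a factor followed by nothing or
   by an L step, and moving the path contiguously onto that factor gives an occurrence
   of (P, e'). *)

Lemma child_vertex s t a c : child s t a = Some c -> vertex t a /\ vertex t c.
Proof.
rewrite /vertex; elim: t a c => [|l IHl r IHr] a c //=.
case: ifP => [/eqP ->|_].
  by case: s {IHl IHr}; [case: r => [|r1 r2] //= [<-] | case: l => [|l1 l2] //= [<-]];
    split; lia.
case: ifP => [lt /IHl|ge]; first by lia.
by case E: child => [c'|] //= [<-]; have := IHr _ _ E; lia.
Qed.

Lemma par_root t : par t (broot t) = None.
Proof. by case: t => //= l r; rewrite eqxx. Qed.

Lemma childE_root s l r : child s (BNode l r) (bsize l).+1 =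
  if s then (if r is BNode _ _ then Some (broot r + (bsize l).+1) else None)
  else (if l is BNode _ _ then Some (broot l) else None).
Proof. by rewrite /= eqxx; case: s. Qed.

Lemma childE_left s l r a : a < (bsize l).+1 -> child s (BNode l r) a = child s l a.
Proof. by move=> H /=; rewrite ltn_eqF // H. Qed.

Lemma childE_right s l r a : (bsize l).+1 < a ->
  child s (BNode l r) a = omap (addn^~ (bsize l).+1) (child s r (a - (bsize l).+1)).
Proof. by move=> H /=; rewrite gtn_eqF // ltnNge ltnW. Qed.

Lemma parE_left l r a : a < (bsize l).+1 ->
  par (BNode l r) a = if a == broot l then Some (bsize l).+1 else par l a.
Proof. by move=> H /=; rewrite ltn_eqF // H. Qed.

Lemma parE_right l r a : (bsize l).+1 < a ->
  par (BNode l r) a = if a - (bsize l).+1 == broot r then Some (bsize l).+1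
     else omap (addn^~ (bsize l).+1) (par r (a - (bsize l).+1)).
Proof. by move=> H /=; rewrite gtn_eqF // ltnNge ltnW. Qed.

Lemma child_par s t a c : child s t a = Some c -> par t c = Some a.
Proof.
elim: t a c => [|l IHl r IHr] a c //.
have [->|ne] := eqVneq a (bsize l).+1.
  rewrite childE_root; case: s {IHl IHr}.
    case: r => [|r1 r2] // [<-]; rewrite parE_right /=; last lia.
    by rewrite addnK eqxx.
  by case: l => [|l1 l2] // [<-]; rewrite parE_left /= ?eqxx //; lia.
have [lt|ge] := ltnP a (bsize l).+1.
  rewrite childE_left // => E; have [_ Vc] := child_vertex E.
  rewrite parE_left; last by move: Vc; rewrite /vertex; lia.
  rewrite (IHl _ _ E); case: eqP => // Ec.
  by move: (IHl _ _ E); rewrite Ec par_root.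
rewrite childE_right; last lia.
case E: child => [c'|] // [<-]; have [Va Vc] := child_vertex E.
rewrite parE_right; last by move: Vc; rewrite /vertex; lia.
rewrite addnK (IHr _ _ E); case: eqP => [Ec|_]; last by rewrite /= subnK //; lia.
by move: (IHr _ _ E); rewrite Ec par_root.
Qed.

Lemma child_nonroot s t p x : child s t p = Some x -> x <> broot t.
Proof. by move=> /child_par E Ex; rewrite Ex par_root in E. Qed.

Lemma child_of_nonroot t x : vertex t x -> x <> broot t -> exists p s, child s t p = Some x.
Proof.
elim: t x => [|l IHl r IHr] x; first by rewrite /vertex /=; lia.
move=> Hx nr; have {}Hx : 0 < x <= (bsize l + bsize r).+1 := Hx.
rewrite /= in nr.
have [ltx|gex] := ltnP x (bsize l).+1.
  have Vx : vertex l x by rewrite /vertex; lia.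
  have [->|ne] := eqVneq x (broot l).
    exists (bsize l).+1, false; rewrite childE_root.
    by case: l {IHl ltx nr Hx} Vx => [|l1 l2]; rewrite /vertex /=; [lia|].
  have [p [s E]] := IHl _ Vx (elimN eqP ne); have [Vp _] := child_vertex E.
  by exists p, s; rewrite childE_left //; move: Vp; rewrite /vertex; lia.
have Vx : vertex r (x - (bsize l).+1) by rewrite /vertex; lia.
have [E|ne] := eqVneq (x - (bsize l).+1) (broot r).
  exists (bsize l).+1, true; rewrite childE_root.
  by case: r {IHr Hx} Vx E => [|r1 r2]; rewrite /vertex /=; [lia|] => _ <-; congr Some; lia.
have [p [s E]] := IHr _ Vx (elimN eqP ne); have [Vp _] := child_vertex E.
exists (p + (bsize l).+1), s; rewrite childE_right; last by move: Vp; rewrite /vertex; lia.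
by rewrite addnK E /= subnK //; lia.
Qed.

(** * Walks *)

Lemma neq_negb (a b : bool) : a != b -> a = ~~ b.
Proof. by case: a; case: b. Qed.

Fixpoint walk (t : btree) (a : nat) (ms : seq bool) : option nat :=
  if ms is s :: ms' then obind (walk t ^~ ms') (child s t a) else Some a.

Lemma walk_cons t a s ms : walk t a (s :: ms) = obind (walk t ^~ ms) (child s t a).
Proof. by []. Qed.

Lemma walk_cat t a ms1 ms2 :
  walk t a (ms1 ++ ms2) = obind (walk t ^~ ms2) (walk t a ms1).
Proof. by elim: ms1 a => [|s ms1 IH] a //=; case: child. Qed.

Lemma walk_catE t a b ms1 ms2 : walk t a ms1 = Some b ->
  walk t a (ms1 ++ ms2) = walk t b ms2.
Proof. by rewrite walk_cat => ->. Qed.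

Lemma walk_catP t a c ms1 ms2 : walk t a (ms1 ++ ms2) = Some c ->
  exists2 b, walk t a ms1 = Some b & walk t b ms2 = Some c.
Proof. by rewrite walk_cat; case: walk => //= b; exists b. Qed.

Lemma walk_consP t a s ms b : walk t a (s :: ms) = Some b ->
  exists2 c, child s t a = Some c & walk t c ms = Some b.
Proof. by rewrite /=; case: child => //= c; exists c. Qed.

Lemma walk1 s t a c : child s t a = Some c -> walk t a [:: s] = Some c.
Proof. by move=> /= ->. Qed.

Lemma walk_vertex t a ms b : walk t a ms = Some b -> vertex t a -> vertex t b.
Proof.
elim: ms a => [|s ms IH] a /=; first by case=> ->.
by case E: child => [c|] //= /IH; have [_ Vc] := child_vertex E; auto.
Qed.

Lemma walkE_left l r a ms : a < (bsize l).+1 ->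
  walk (BNode l r) a ms = walk l a ms.
Proof.
elim: ms a => [|s ms IH] a // lt; rewrite !walk_cons childE_left //.
case E: child => [c|] //=; have [_ Vc] := child_vertex E.
by apply: IH; move: Vc; rewrite /vertex; lia.
Qed.

Lemma walkE_right l r a ms : (bsize l).+1 < a ->
  walk (BNode l r) a ms = omap (addn^~ (bsize l).+1) (walk r (a - (bsize l).+1) ms).
Proof.
elim: ms a => [|s ms IH] a lt; first by rewrite /= subnK //; lia.
rewrite !walk_cons childE_right //; case E: child => [c|] //=; have [_ Vc] := child_vertex E.
by rewrite IH ?addnK //; move: Vc; rewrite /vertex; lia.
Qed.

Lemma walk_cons_label t a s ms b : walk t a (s :: ms) = Some b ->
  if s then a < b else b < a.
Proof.
elim: t a b => [|l IHl r IHr] a b //.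
have [->|ne] := eqVneq a (bsize l).+1.
  rewrite walk_cons childE_root; case: s {IHl IHr}.
    case: r => [|r1 r2] //= W; rewrite walkE_right /= in W; last lia.
    move: W; case W': walk => [b'|] //= [<-].
    have /(_ _)/andP[] := walk_vertex W'; rewrite /vertex /=; lia.
  case: l => [|l1 l2] //= W; rewrite walkE_left /= in W; last lia.
  have /(_ _)/andP[] := walk_vertex W; rewrite /vertex /=; lia.
have [lt|ge] := ltnP a (bsize l).+1; first by rewrite walkE_left //; exact: IHl.
rewrite walkE_right; last lia.
by case W: walk => [b'|] //= [<-]; have := IHr _ _ W; case: s {IHl IHr W}; lia.
Qed.

Lemma walk_acyclic t a ms : walk t a ms = Some a -> ms = [::].
Proof. by case: ms => // s ms /walk_cons_label; case: s; rewrite ltnn. Qed.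

Lemma walk_sides_disjoint t a b s ms1 ms2 :
  walk t a (s :: ms1) = Some b -> walk t a (~~ s :: ms2) = Some b -> False.
Proof. by move=> /walk_cons_label + /walk_cons_label; case: s => /=; lia. Qed.

Lemma child_side_inj s s' t a c : child s t a = Some c -> child s' t a = Some c -> s = s'.
Proof.
move=> /walk1 W /walk1 W'; case: (eqVneq s' s) => // /neq_negb Es'.
by rewrite Es' in W'; case: (walk_sides_disjoint W W').
Qed.

Lemma walk_desc t a ms b : walk t a ms = Some b -> desc t a b.
Proof.
elim/last_ind: ms b => [b [<-]|ms s IH b]; first exact: desc_refl.
by rewrite -cats1 => /walk_catP[c /IH Dc /walk_consP[b' E [<-]]]; exact: desc_step Dc E.
Qed.

Lemma desc_walk t a b : desc t a b -> exists ms, walk t a ms = Some b.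
Proof.
elim => [|b0 c s _ [ms W] E]; first by exists [::].
by exists (rcons ms s); rewrite -cats1 (walk_catE _ W) /= E.
Qed.

Lemma in_side_subP s t a b : in_side_sub s t a b <-> exists ms, walk t a (s :: ms) = Some b.
Proof.
split=> [[c [E /desc_walk[ms W]]]|[ms /walk_consP[c E /walk_desc]]]; last by exists c.
by exists ms; rewrite /= E.
Qed.

Lemma walk_from_root t v : vertex t v -> exists ms, walk t (broot t) ms = Some v.
Proof.
elim: t v => [|l IHl r IHr] v; first by rewrite /vertex /=; lia.
move=> Vv; have {}Vv : 0 < v <= (bsize l + bsize r).+1 := Vv.
have [->|ne] := eqVneq v (bsize l).+1; first by exists [::].
have [lt|ge] := ltnP v (bsize l).+1.
  have [|ms W] := IHl v; first by rewrite /vertex; lia.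
  exists (false :: ms); rewrite walk_cons childE_root.
  case: l {IHl} W lt ne Vv => [|l1 l2] W lt ne Vv; first by rewrite /= in lt; lia.
  by rewrite /= walkE_left //=; lia.
have [|ms W] := IHr (v - (bsize l).+1); first by rewrite /vertex; lia.
exists (true :: ms); rewrite walk_cons childE_root.
case: r {IHr} W Vv => [|r1 r2] W Vv; first by rewrite /= in Vv; lia.
by rewrite /= walkE_right /= ?addnK ?W /= ?subnK //; lia.
Qed.

Lemma bool_seq_split_prefix (x y : seq bool) : exists c x' y',
  [/\ x = c ++ x', y = c ++ y' &
      [\/ x' = [::], y' = [::] | exists s ms1 ms2, x' = s :: ms1 /\ y' = ~~ s :: ms2]].
Proof.
elim: x y => [|a x IH] [|b y]; try by exists [::], [:: a & x], [::]; split=> //; apply: Or32.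
- by exists [::], [::], [::]; split=> //; apply: Or31.
- by exists [::], [::], (b :: y); split=> //; apply: Or31.
have [<-|ne] := eqVneq a b.
  by have [c [x' [y' [-> -> H]]]] := IH y; exists (a :: c), x', y'.
exists [::], (a :: x), (b :: y); split=> //; apply: Or33; exists a, x, y.
by split=> //; case: a b ne => [] [].
Qed.

Lemma walk_trichotomy t u v : vertex t u -> vertex t v ->
  [\/ exists ms, walk t u ms = Some v, exists ms, walk t v ms = Some u |
      exists w s ms1 ms2, walk t w (s :: ms1) = Some u /\ walk t w (~~ s :: ms2) = Some v].
Proof.
move=> /walk_from_root[mu Wu] /walk_from_root[mv Wv].
have [c [x' [y' [Ex Ey H]]]] := bool_seq_split_prefix mu mv.
move: Wu Wv; rewrite Ex Ey => /walk_catP[w Wc Wu]; rewrite (walk_catE _ Wc) => Wv.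
case: H => [Ex'|Ey'|[s [ms1 [ms2 [Ex' Ey']]]]].
- by apply: Or31; exists y'; move: Wu; rewrite Ex' => -[<-].
- by apply: Or32; exists x'; move: Wv; rewrite Ey' => -[<-].
- by apply: Or33; exists w, s, ms1, ms2; rewrite -Ex' -Ey'.
Qed.

Definition visit (t : btree) (a : nat) (ms : seq bool) (k : nat) : nat :=
  odflt 0 (walk t a (take k ms)).

Section Visit.
Variables (t : btree) (a b : nat) (ms : seq bool).
Hypothesis ms_walk : walk t a ms = Some b.

Lemma visitP k : walk t a (take k ms) = Some (visit t a ms k).
Proof.
have : walk t a (take k ms ++ drop k ms) = Some b by rewrite cat_take_drop.
by case/walk_catP=> c Wc _; rewrite /visit Wc.
Qed.

Lemma visit0 : visit t a ms 0 = a.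
Proof. by rewrite /visit take0. Qed.

Lemma visit_size : visit t a ms (size ms) = b.
Proof. by rewrite /visit take_size ms_walk. Qed.

Lemma visitS x0 k : k < size ms ->
  child (nth x0 ms k) t (visit t a ms k) = Some (visit t a ms k.+1).
Proof.
move=> lt; have := visitP k.+1; rewrite (take_nth x0 lt) -cats1 (walk_catE _ (visitP k)).
by rewrite walk_cons; case: child => //= c [->].
Qed.

Lemma visit_inj k1 k2 : k1 <= size ms -> k2 <= size ms ->
  visit t a ms k1 = visit t a ms k2 -> k1 = k2.
Proof.
wlog le12 : k1 k2 / k1 <= k2 => [H h1 h2 E|h1 h2 E].
  by case: (leqP k1 k2) => [/H|/ltnW/H]; [apply | move=> H'; rewrite (H' h2 h1)].
have := visitP k2; rewrite -[in take k2 _](subnKC le12) takeD (walk_catE _ (visitP k1)) -E.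
by move/walk_acyclic/(congr1 size); rewrite size_take size_drop /=; case: ifP; lia.
Qed.

End Visit.

(** * Occurrences of patterns *)

Definition embedding (T P : btree) (e : nat -> bool) (f : nat -> nat) : Prop :=
  [/\ forall i, vertex P i -> vertex T (f i),
      forall i j, vertex P i -> vertex P j -> f i = f j -> i = j &
      forall i, vertex P i -> i <> broot P ->
        forall p s, par P i = Some p -> child s P p = Some i ->
          if e i then child s T (f p) = Some (f i) else in_side_sub s T (f p) (f i)].

Lemma containsP T P e : contains T P e <-> exists f, embedding T P e f.
Proof. by split=> [[f [? [? ?]]]|[f [? ? ?]]]; exists f. Qed.

Lemma edge_of_child (b : bool) s t a c : child s t a = Some c ->
  if b then child s t a = Some c else in_side_sub s t a c.
Proof. by case: b => // E; exists c; split=> //; exact: desc_refl. Qed.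

Section Embedding.
Variables (T P : btree) (e : nat -> bool) (f : nat -> nat).
Hypothesis f_emb : embedding T P e f.

Lemma embedding_edge s q x : child s P q = Some x ->
  if e x then child s T (f q) = Some (f x) else in_side_sub s T (f q) (f x).
Proof.
move=> E; have [_ Vx] := child_vertex E; case: f_emb => _ _ He.
exact: He x Vx (child_nonroot E) q s (child_par E) E.
Qed.

Lemma embedding_child_walk s q x : child s P q = Some x ->
  exists ms, walk T (f q) (s :: ms) = Some (f x).
Proof.
move/embedding_edge; case: (e x) => [E|/in_side_subP //].
by exists [::]; rewrite walk_cons E.
Qed.

Lemma embedding_walk_cons a s ms b : walk P a (s :: ms) = Some b ->
  exists ms', walk T (f a) (s :: ms') = Some (f b).
Proof.
elim: ms a s => [|s' ms IH] a s /walk_consP[c E W].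
  by case: W => <-; exact: embedding_child_walk E.
have [ms1 W1] := embedding_child_walk E; have [ms2 W2] := IH _ _ W.
by exists (ms1 ++ s' :: ms2); rewrite -cat_cons (walk_catE _ W1).
Qed.

(* The other two cases of the trichotomy are preserved by f, and each is
   incompatible with f x reaching f v. *)
Lemma embedding_walk_reflect x v ms : vertex P x -> vertex P v ->
  walk T (f x) ms = Some (f v) -> exists ms', walk P x ms' = Some v.
Proof.
move=> Vx Vv W.
case: (walk_trichotomy Vx Vv) => [//|[ms2 W2]|[w [s [ms1 [ms2 [W1 W2]]]]]].
- case: ms2 W2 => [[->]|s ms2 W2]; first by exists [::].
  have [ms3 /(walk_catE ms)] := embedding_walk_cons W2.
  by rewrite W => /walk_acyclic.
- have [ms3 /(walk_catE ms)] := embedding_walk_cons W1; rewrite W => W3.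
  have [ms4 W4] := embedding_walk_cons W2.
  by case: (walk_sides_disjoint W3 W4).
Qed.

Lemma embedding_contig_walk a ms b : walk P a ms = Some b ->
  (forall k, 0 < k <= size ms -> e (visit P a ms k)) -> walk T (f a) ms = Some (f b).
Proof.
elim: ms a => [a [->] //|s ms IH a /walk_consP[c E W] contig].
have ec : e c by have := contig 1 isT; rewrite /visit /= E take0.
have := embedding_edge E; rewrite ec walk_cons => ->; apply: IH => // k k_ms.
by have := contig k.+1; rewrite /visit /= E; apply; lia.
Qed.

End Embedding.

Lemma embedding_relax T P (e e' : nat -> bool) f : (forall x, e x -> e' x) ->
  embedding T P e' f -> embedding T P e f.
Proof.
move=> le [Hv Hi He]; split=> // x Vx xr q s Eq Ex; have := He x Vx xr q s Eq Ex.
case ex: (e x); first by rewrite le.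
by case: (e' x) => // E; exists (f x); split=> //; exact: desc_refl.
Qed.

Lemma set_contig_id e i x : x <> i -> set_contig e i x = e x.
Proof. by move=> /eqP ne; rewrite /set_contig ifN. Qed.

Section LeafCase.
Variables (T P : btree) (e : nat -> bool) (f : nat -> nat) (p i y : nat) (s : bool).
Hypotheses (f_emb : embedding T P e f) (i_child : child s P p = Some i).
Hypothesis i_leaf : forall s', child s' P i = None.
Hypothesis y_child : child s T (f p) = Some y.

Lemma leaf_slot_fresh v : vertex P v -> v <> i -> y <> f v.
Proof.
have [Vp _] := child_vertex i_child.
move=> Vv vi Eyv; have := walk1 y_child; rewrite Eyv => Wyv.
have [[|s' ms] W] := embedding_walk_reflect f_emb Vp Vv Wyv.
  by case: W Wyv => -> /walk_acyclic.
have [Es'|ne] := eqVneq s' s.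
  move: W; rewrite Es' => /walk_consP[c]; rewrite i_child => -[<-].
  by case: ms => [[/esym]|s'' ms] //=; rewrite i_leaf.
have [ms' W'] := embedding_walk_cons f_emb W.
rewrite (neq_negb ne) in W'; exact: walk_sides_disjoint Wyv W'.
Qed.

Lemma leaf_reroute : exists f', embedding T P (set_contig e i) f'.
Proof.
exists (fun x => if x == i then y else f x); case: f_emb => Hv Hi He.
split=> [x Vx|x v Vx Vv|x Vx xr q s' Eq Ex].
- by case: eqP => _; [have [] := child_vertex y_child | exact: Hv].
- case: eqP => [->|xi]; case: eqP => [->|vi] // E.
  + by case: (leaf_slot_fresh Vv vi).
  + by case: (leaf_slot_fresh Vx xi).
  + exact: Hi.
have [Exi|xi] := eqVneq x i.
  subst x; have Eqp : q = p by move: (child_par i_child); rewrite Eq => -[].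
  have pi : p != i by apply/eqP => Epi; move: i_child; rewrite Epi i_leaf.
  rewrite Eqp in Ex *.
  by rewrite (negbTE pi) /set_contig eqxx (child_side_inj Ex i_child).
have [Eqi|qi] := eqVneq q i; first by move: Ex; rewrite Eqi i_leaf.
rewrite set_contig_id; last exact/eqP.
exact: He.
Qed.

End LeafCase.

(** * Re-embedding a path *)

(* The vertices N k of a path a0 -W-> b of P are moved onto the vertices G k of a
   copy y0 -W-> z of the same walk lying between f a0 and f b in T; all other
   vertices keep their image. *)
Section PathReroute.
Variables (T P : btree) (e e' : nat -> bool) (f : nat -> nat).
Hypothesis f_emb : embedding T P e f.
Variables (a0 b : nat) (W : seq bool) (d : bool).
Hypotheses (a0_vertex : vertex P a0) (path_walk : walk P a0 W = Some b).
Local Notation N := (visit P a0 W).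
Hypothesis path_children :
  forall k s, k <= size W -> child s P (N k) != None -> s = nth d W k.
Definition off_path x := forall k, k <= size W -> N k <> x.
Hypothesis top_noncontig : a0 = broot P \/ e' a0 = false.
Hypothesis bottom_noncontig : forall c, child d P b = Some c -> e' c = false.
Hypothesis e'_off_path : forall x, off_path x -> e' x -> e x.
Variables (y0 z : nat) (u v : seq bool).
Hypotheses (u_walk : walk T (f a0) u = Some y0) (image_walk : walk T y0 W = Some z).
Hypothesis v_walk : walk T z v = Some (f b).
Hypothesis v_dir : v = [::] \/ exists v', v = d :: v'.
Local Notation G := (visit T y0 W).

Lemma path_child k s x : k <= size W -> child s P (N k) = Some x ->
  (k < size W /\ x = N k.+1) \/ (k = size W /\ s = d).
Proof.
move=> le E; have Es : s = nth d W k by apply: path_children; rewrite ?E.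
case: (ltnP k (size W)) => lt; last by right; split; [lia | rewrite Es nth_default].
by left; split=> //; move: (visitS path_walk d lt); rewrite -Es E => -[].
Qed.

Lemma path_no_parent_of_top s : ~ exists2 k, k <= size W & child s P (N k) = Some a0.
Proof.
case=> k le /walk1 W1; have := walk_catE [:: s] (visitP path_walk k).
by rewrite W1 => /walk_acyclic/(congr1 size); rewrite size_cat addn1.
Qed.

Lemma below_path_top ms x : walk P a0 ms = Some x ->
  (exists2 k, k <= size W & x = N k) \/ in_side_sub d P b x.
Proof.
move/walk_desc; elim=> [|x' c s _ IH E]; first by left; exists 0; rewrite ?visit0.
case: IH => [[k le Ex']|[c' [Ec' Dc']]]; last by right; exists c'; split=> //; exact: desc_step E.
rewrite Ex' in E; case: (path_child le E) => [[lt ->]|[Ek Es]]; first by left; exists k.+1.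
by right; exists c; rewrite -(visit_size path_walk) -Ek -Es; split=> //; exact: desc_refl.
Qed.

Lemma path_image_walk k : walk T (G k) (drop k W ++ v) = Some (f b).
Proof.
have Wz : walk T (G k) (drop k W) = Some z.
  by rewrite -(walk_catE _ (visitP image_walk k)) cat_take_drop.
by rewrite (walk_catE _ Wz).
Qed.

(* An off-path vertex x with f x = G k would lie below a0, hence below the d-child of b,
   and then f b would reach itself through f x and G k. *)
Lemma path_image_fresh x k : vertex P x -> off_path x -> G k <> f x.
Proof.
move=> Vx off EG.
have : walk T (f a0) (u ++ take k W) = Some (f x).
  by rewrite (walk_catE _ u_walk) -EG (visitP image_walk).
case/(embedding_walk_reflect f_emb a0_vertex Vx)=> ms /below_path_top[[k' le' /esym]|].
  exact: off.
case/in_side_subP=> ms' /(embedding_walk_cons f_emb)[ms'' /(walk_catE (drop k W ++ v))].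
by rewrite -EG path_image_walk => /walk_acyclic.
Qed.

Definition reroute x :=
  if [pick k : 'I_(size W).+1 | N k == x] is Some k then G k else f x.

Lemma on_path_dec x : (exists2 k, k <= size W & N k = x) \/ off_path x.
Proof.
case: (pickP (fun k : 'I_(size W).+1 => N k == x)) => [k /eqP Ex|off].
  by left; exists k; rewrite // -ltnS ltn_ord.
by right=> k; rewrite -ltnS => lt Ex; have := off (Ordinal lt); rewrite /= Ex eqxx.
Qed.

Lemma reroute_path k : k <= size W -> reroute (N k) = G k.
Proof.
rewrite -ltnS => lt; rewrite /reroute; case: pickP => [k' /eqP E|/(_ (Ordinal lt))].
  by rewrite (visit_inj path_walk _ _ E) // -ltnS ltn_ord.
by rewrite /= eqxx.
Qed.

Lemma reroute_off x : off_path x -> reroute x = f x.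
Proof.
move=> off; rewrite /reroute; case: pickP => // k /eqP Ex.
by case: (off k _ Ex); rewrite -ltnS ltn_ord.
Qed.

Lemma reroute_edge_path k s q : k < size W -> child s P q = Some (N k.+1) ->
  if e' (N k.+1) then child s T (reroute q) = Some (reroute (N k.+1))
  else in_side_sub s T (reroute q) (reroute (N k.+1)).
Proof.
move=> lt E; have Ek := visitS path_walk d lt.
have Eq : q = N k by move: (child_par E); rewrite (child_par Ek) => -[].
rewrite Eq in E *; rewrite (child_side_inj E Ek) !reroute_path ?(ltnW lt) //.
exact: edge_of_child (visitS image_walk d lt).
Qed.

Lemma reroute_edge_top s q : a0 <> broot P -> child s P q = Some a0 ->
  if e' a0 then child s T (reroute q) = Some (reroute a0)
  else in_side_sub s T (reroute q) (reroute a0).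
Proof.
move=> nr E; have -> : e' a0 = false by case: top_noncontig.
have -> : reroute a0 = y0 by rewrite -{1}(visit0 P a0 W) reroute_path // visit0.
rewrite reroute_off => [|k le Ek]; last first.
  by apply: (path_no_parent_of_top (s := s)); exists k; rewrite ?Ek.
have [ms Wa0] := embedding_child_walk f_emb E.
by apply/in_side_subP; exists (ms ++ u); rewrite -cat_cons (walk_catE _ Wa0).
Qed.

Lemma reroute_edge_off x s q : off_path x -> child s P q = Some x ->
  if e' x then child s T (reroute q) = Some (reroute x)
  else in_side_sub s T (reroute q) (reroute x).
Proof.
move=> off E; rewrite (reroute_off off).
case: (on_path_dec q) => [[k le Ekq]|offq]; last first.
  rewrite (reroute_off offq); have := embedding_edge f_emb E.
  case ex': (e' x); first by rewrite (e'_off_path off ex').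
  by move=> _; apply/in_side_subP; exact: (embedding_child_walk f_emb E).
rewrite -Ekq in E *; case: (path_child le E) => [[lt Ex]|[Ek Es]].
  by case: (off k.+1 lt); rewrite Ex.
subst s; rewrite Ek (visit_size path_walk) in E.
rewrite reroute_path Ek ?(visit_size image_walk) // bottom_noncontig //.
have [ms Wx] := embedding_child_walk f_emb E.
apply/in_side_subP; case: v_dir => [Ev|[v' Ev]]; have := v_walk; rewrite Ev.
  by case=> ->; exists ms.
by move=> Wv; exists (v' ++ d :: ms); rewrite -cat_cons (walk_catE _ Wv).
Qed.

Lemma reroute_embedding : embedding T P e' reroute.
Proof.
case: f_emb => Hv Hi _.
have Vy0 : vertex T y0 := walk_vertex u_walk (Hv _ a0_vertex).
have VG k : vertex T (G k) := walk_vertex (visitP image_walk k) Vy0.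
split=> [x Vx|x x' Vx Vx'|x Vx xr q s _ Ex].
- by case: (on_path_dec x) => [[k le <-]|off]; rewrite ?reroute_path ?reroute_off //; exact: Hv.
- case: (on_path_dec x) => [[k le <-]|off]; case: (on_path_dec x') => [[k' le' <-]|off'];
    rewrite ?reroute_path ?reroute_off //.
  + by move/(visit_inj image_walk le le') ->.
  + by move/path_image_fresh => /(_ Vx' off').
  + by move/esym/path_image_fresh => /(_ Vx off).
  + exact: Hi.
- case: (on_path_dec x) => [[[|k] le Ex']|off]; last exact: reroute_edge_off off Ex.
  + by move: xr Ex; rewrite -Ex' visit0; exact: reroute_edge_top.
  + by move: Ex; rewrite -Ex'; exact: reroute_edge_path.
Qed.

End PathReroute.

(** * Contiguous chains *)

Definition contig_chain (s : bool) (t : btree) (e : nat -> bool) (a l : nat) : Prop :=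
  forall j, 1 <= j <= l -> exists c, iter_child s t j a = Some c /\ e c.

Lemma contig_chain0 s t e a : contig_chain s t e a 0.
Proof. by move=> [|j]. Qed.

Lemma iter_child_walk s t l a : iter_child s t l a = walk t a (nseq l s).
Proof.
elim: l => [|l IH] //; rewrite -addn1 nseqD walk_cat -IH addn1 /=.
by case: iter_child => //= b; case: child.
Qed.

Lemma iter_childD s t k j a :
  iter_child s t (k + j) a = obind (iter_child s t j) (iter_child s t k a).
Proof.
by rewrite !iter_child_walk nseqD walk_cat; case: walk => //= b; rewrite iter_child_walk.
Qed.

Lemma iter_child_shift s t l a c : child s t a = Some c ->
  iter_child s t l.+1 a = iter_child s t l c.
Proof. by move=> E; rewrite -add1n iter_childD /= E. Qed.

Lemma iter_child_fix s t l a : iter_child s t l a = Some a -> l = 0.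
Proof. by rewrite iter_child_walk => /walk_acyclic/(congr1 size); rewrite size_nseq. Qed.

(* Parents are unique, so two chains ending at the same vertex are nested. *)
Lemma iter_child_nested s t l1 l2 a b p : iter_child s t l1 a = Some p ->
  iter_child s t l2 b = Some p -> l1 <= l2 -> iter_child s t (l2 - l1) b = Some a.
Proof.
elim: l1 l2 p => [|l1 IH] l2 p /=; first by case=> <- Eb _; rewrite subn0.
case: l2 => [|l2] //=; case Ea: iter_child => [q|] //= Eq.
case Eb: iter_child => [q'|] //= Eq' le; rewrite subSS; apply: IH Ea _ le.
by move: (child_par Eq) (child_par Eq') => -> [->].
Qed.

Lemma contig_chain_drop s t e a l k c : iter_child s t l a = Some c -> contig_chain s t e a l ->
  k <= l -> exists b, [/\ iter_child s t k a = Some b, iter_child s t (l - k) b = Some c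
                        & contig_chain s t e b (l - k)].
Proof.
move=> El Hc le; have : iter_child s t (k + (l - k)) a = Some c by rewrite subnKC.
rewrite iter_childD; case Ek: iter_child => [b|] //= Eb; exists b; split=> // j j_lk.
by have := Hc (k + j); rewrite iter_childD Ek /=; apply; lia.
Qed.

Lemma contig_chain_le s t e a l1 l2 : l1 <= l2 ->
  contig_chain s t e a l2 -> contig_chain s t e a l1.
Proof. by move=> le Hc j j_l; apply: Hc; lia. Qed.

Lemma contig_chain_visit s t e a l : contig_chain s t e a l ->
  forall k, 0 < k <= size (nseq l s) -> e (visit t a (nseq l s) k).
Proof.
move=> Hc k; rewrite size_nseq => k_l; have [c [Ec ec]] := Hc k k_l.
by rewrite /visit take_nseq -?iter_child_walk ?Ec //; lia.
Qed.

Lemma inA_top_exists s P e p a : inA s P e p a -> exists a0, is_top_A s P e p a0.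
Proof.
move: a; suff H n a : (if s then a else bsize P - a) = n -> inA s P e p a ->
  exists a0, is_top_A s P e p a0 by move=> a; exact: H.
elim/ltn_ind: n a => n IH a Ea [Va [l [El Hc]]].
have [[q Eq ea]|top] : (exists2 q, child s P q = Some a & e a) \/
                       (forall q, child s P q = Some a -> e a = false).
  case ea: (e a); last by right.
  case Epa: (par P a) => [q|]; last by right=> q /child_par; rewrite Epa.
  have [Eq|ne] := eqVneq (child s P q) (Some a); first by left; exists q.
  by right=> q' Eq'; move: ne; have := child_par Eq'; rewrite Epa => -[->]; rewrite Eq' eqxx.
- have [Vq _] := child_vertex Eq; apply: (IH _ _ q erefl).
    by have := walk_cons_label (walk1 Eq); move: Vq Va; rewrite /vertex -Ea; case: (s); lia.
  split=> //; exists l.+1; rewrite (iter_child_shift _ Eq); split=> // j.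
  case: j => [|[|j]] // j_l; first by exists a; rewrite /= Eq.
  by rewrite (iter_child_shift _ Eq); apply: Hc; lia.
exists a; split=> [|b [Vb [lb [Eb Hcb]]]]; first by split=> //; exists l.
case: (leqP l lb) => le; last first.
  apply: (@walk_desc _ _ (nseq (l - lb) s)).
  by rewrite -iter_child_walk; exact: iter_child_nested Eb El (ltnW le).
have := iter_child_nested El Eb le; case Ek: (lb - l) => [|k] /=.
  by case=> ->; exact: desc_refl.
case Eq: iter_child => [q|] //= Eqa; have [|c [Ec ec]] := Hcb k.+1; first lia.
by move: Ec ec; rewrite /= Eq /= Eqa => -[<-]; rewrite (top _ Eqa).
Qed.

Lemma inB'_bottom_exists d P e i x : inB' d P e i x ->
  exists2 y, inB' d P e i y & forall c, child d P y = Some c -> e c = false.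
Proof.
move: x; suff H n x : (if d then bsize P - x else x) = n -> inB' d P e i x ->
  exists2 y, inB' d P e i y & forall c, child d P y = Some c -> e c = false.
  by move=> x; exact: H.
elim/ltn_ind: n x => n IH x Ex [l [El Hc]].
case Ec: (child d P x) => [c|]; last by exists x; [exists l | move=> c; rewrite Ec].
case ec: (e c); last by exists x; [exists l | move=> c'; rewrite Ec => -[<-]].
have [Vx Vc] := child_vertex Ec; apply: (IH _ _ c erefl).
  by have := walk_cons_label (walk1 Ec); move: Vx Vc; rewrite /vertex -Ex; case: (d); lia.
exists l.+1; split=> [|j j_l]; first by rewrite /= El.
case: (ltnP j l.+1) => lt; first by apply: Hc; lia.
by exists c; rewrite (_ : j = l.+1) /= ?El //; lia.
Qed.

(** * The sets Y and Y' *)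

Lemma nseq_cat_cons T n (x : T) s : nseq n x ++ x :: s = x :: nseq n x ++ s.
Proof. by elim: n => //= n ->. Qed.

Lemma take_nseq_cat T (x : T) k m s : k <= m -> take k (nseq m x ++ s) = nseq k x.
Proof.
move=> le; rewrite take_cat size_nseq; case: ltnP => [lt|ge]; first by rewrite take_nseq // ltnW.
by rewrite (_ : k = m) ?subnn ?take0 ?cats0 //; lia.
Qed.

Lemma bool_seq_last_occurrence (x : bool) ms :
  exists u t, x :: ms = u ++ x :: nseq t (~~ x).
Proof.
elim/last_ind: ms => [|ms z [u [t E]]]; first by exists [::], 0.
case: (eqVneq z x) => [->|/neq_negb ->]; first by exists (x :: ms), 0; rewrite cats1.
exists u, t.+1; rewrite -rcons_cons E rcons_cat /=.
by congr (_ ++ _ :: _); elim: t {E} => //= t ->.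
Qed.

Lemma bool_seq_leading_run (x : bool) ms :
  exists j v, ms = nseq j x ++ v /\ (v = [::] \/ exists v', v = ~~ x :: v').
Proof.
elim: ms => [|z ms [j [v [E Hv]]]]; first by exists 0, [::]; split; [|left].
case: (eqVneq z x) => [->|/neq_negb ->]; first by exists j.+1, v; rewrite E.
by exists 0, (~~ x :: ms); split=> //; right; exists ms.
Qed.

Lemma path_word_factor (x : bool) m r ms : m = 0 \/ r = 0 ->
  exists u v, nseq m x ++ x :: ms ++ nseq r (~~ x) = u ++ (nseq m x ++ x :: nseq r (~~ x)) ++ v
    /\ (v = [::] \/ exists v', v = ~~ x :: v').
Proof.
case=> [->|->] /=.
  have [u [t E]] := bool_seq_last_occurrence x ms.
  exists u, (nseq t (~~ x)); split; last by case: t {E}; [left | right; eexists].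
  by rewrite -cat_cons E -catA /= -!nseqD addnC.
have [j [v [E Hv]]] := bool_seq_leading_run x ms.
exists (nseq j x), v; split=> //.
by rewrite !cats0 E -catA /= catA -nseqD !nseq_cat_cons catA -nseqD addnC.
Qed.

Section InnerPath.
Variables (d : bool) (T P : btree) (e : nat -> bool) (f : nat -> nat).
Hypothesis f_emb : embedding T P e f.
Variables (p i a0 br m r : nat).
Local Notation s1 := (~~ d).
Hypothesis i_child : child s1 P p = Some i.
Hypotheses (a0_vertex : vertex P a0) (a0_chain : iter_child s1 P m a0 = Some p).
Hypotheses (a0_contig : contig_chain s1 P e a0 m) (a0_top : a0 = broot P \/ e a0 = false).
Hypotheses (br_chain : iter_child d P r i = Some br) (br_contig : contig_chain d P e i r).
Hypothesis br_bottom : forall c, child d P br = Some c -> e c = false.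
Hypothesis A_no_d_child : forall j, inA s1 P e p j -> child d P j = None.
Hypothesis B'_no_s1_child : forall j, inB' d P e i j -> child s1 P j = None.
Hypothesis chain_short : m = 0 \/ r = 0.
Local Notation W := (nseq m s1 ++ s1 :: nseq r d).

Let a0_walk : walk P a0 (nseq m s1) = Some p.
Proof. by rewrite -iter_child_walk. Qed.

Let i_walk : walk P i (nseq r d) = Some br.
Proof. by rewrite -iter_child_walk. Qed.

Lemma inner_path_left k : k <= m -> walk P a0 (take k W) = iter_child s1 P k a0.
Proof. by move=> le; rewrite take_nseq_cat // iter_child_walk. Qed.

Lemma inner_path_right j : j <= r -> walk P a0 (take (m.+1 + j) W) = iter_child d P j i.
Proof.
move=> le; rewrite take_cat size_nseq ifN; last lia.
rewrite (_ : m.+1 + j - m = j.+1) /=; last lia.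
by rewrite take_nseq // (walk_catE _ a0_walk) walk_cons i_child iter_child_walk.
Qed.

Lemma inner_path_walk : walk P a0 W = Some br.
Proof.
have := inner_path_right (leqnn r).
by rewrite take_oversize ?br_chain // size_cat /= !size_nseq; lia.
Qed.

Lemma inner_path_size : size W = m + r.+1.
Proof. by rewrite size_cat /= !size_nseq. Qed.

Lemma inner_path_visit_i : visit P a0 W m.+1 = i.
Proof. by rewrite /visit -(addn0 m.+1) inner_path_right. Qed.

Lemma inner_path_children k s : k <= size W -> child s P (visit P a0 W k) != None ->
  s = nth d W k.
Proof.
rewrite inner_path_size nth_cat size_nseq => le; case: (leqP k m) => km.
  have [b [Eb Ebp Hc]] := contig_chain_drop a0_chain a0_contig km.
  have Vb : vertex P b by move: Eb; rewrite iter_child_walk => /walk_vertex; apply.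
  have -> : visit P a0 W k = b by rewrite /visit inner_path_left // Eb.
  have -> : (if k < m then nth d (nseq m s1) k else nth d (s1 :: nseq r d) (k - m)) = s1.
    by case: ltnP => h; [rewrite nth_nseq h | rewrite (_ : k - m = 0) //; lia].
  have Ab : inA s1 P e p b := conj Vb (ex_intro _ (m - k) (conj Ebp Hc)).
  by case: (eqVneq s d) => [->|/neq_negb //]; rewrite (A_no_d_child Ab) eqxx.
have jr : k - m.+1 <= r by lia.
have [b [Eb _ _]] := contig_chain_drop br_chain br_contig jr.
have -> : visit P a0 W k = b.
  by rewrite /visit (_ : k = m.+1 + (k - m.+1)) ?inner_path_right ?Eb //; lia.
rewrite ltnNge (ltnW km) (_ : k - m = (k - m.+1).+1) /= ?nth_nseq ?if_same; last lia.
have Bb : inB' d P e i b := ex_intro _ (k - m.+1) (conj Eb (contig_chain_le jr br_contig)).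
by case: (eqVneq s d) => [|/neq_negb ->] //; rewrite (B'_no_s1_child Bb) eqxx.
Qed.

Lemma inner_path_image : exists y0 z u v,
  [/\ walk T (f a0) u = Some y0, walk T y0 W = Some z, walk T z v = Some (f br)
    & v = [::] \/ exists v', v = d :: v'].
Proof.
have Tp := embedding_contig_walk f_emb a0_walk (contig_chain_visit a0_contig).
have Tbr := embedding_contig_walk f_emb i_walk (contig_chain_visit br_contig).
have [ms Ti] := embedding_child_walk f_emb i_child.
have [u [v []]] := path_word_factor s1 ms chain_short; rewrite negbK => Ew v_dir.
have : walk T (f a0) (nseq m s1 ++ s1 :: ms ++ nseq r d) = Some (f br).
  by rewrite (walk_catE _ Tp) -cat_cons (walk_catE _ Ti).
rewrite Ew => /walk_catP[y0 Tu /walk_catP[z TW Tv]].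
by exists y0, z, u, v.
Qed.

Lemma inner_path_reroute : exists f', embedding T P (set_contig e i) f'.
Proof.
have [y0 [z [u [v [Tu TW Tv v_dir]]]]] := inner_path_image.
have m_le : m.+1 <= size W by rewrite inner_path_size; lia.
eexists; apply: (reroute_embedding f_emb a0_vertex inner_path_walk inner_path_children)
  Tu TW Tv v_dir.
- case: a0_top => [|ea0]; [by left | right]; rewrite set_contig_id // => a0i.
  have := visit_inj inner_path_walk (leq0n _) m_le.
  by rewrite visit0 inner_path_visit_i => /(_ a0i).
- move=> c Ec; rewrite set_contig_id ?br_bottom // => ci.
  have : walk P i (nseq r d ++ [:: d]) = Some i.
    by rewrite (walk_catE _ i_walk) /= Ec ci.
  by move/walk_acyclic/(congr1 size); rewrite size_cat addn1.
- move=> x off; rewrite set_contig_id // => xi.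
  by apply: (off m.+1 m_le); rewrite inner_path_visit_i.
Qed.

End InnerPath.

Lemma leaf_set_contig T P e f i : embedding T P e f -> inX P i -> i <> broot P ->
  exists f', embedding T P (set_contig e i) f'.
Proof.
move=> f_emb [Vi [cLi cRi]] nr; have leaf : forall s, child s P i = None by case.
have [p [s Ei]] := child_of_nonroot Vi nr.
have [ms /walk_consP[y Ey _]] := embedding_child_walk f_emb Ei.
exact: leaf_reroute f_emb Ei leaf Ey.
Qed.

Lemma inYgen_set_contig d T P e f i : embedding T P e f -> inYgen d P e i ->
  exists f', embedding T P (set_contig e i) f'.
Proof.
move=> f_emb [Vi [_ [p [_ [i_child [short_chain [A_no_d [B'_no_s1 top]]]]]]]].
have [Vp _] := child_vertex i_child.
have A_p : inA (~~ d) P e p p by split=> //; exists 0; split=> //; exact: contig_chain0.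
have [a0 a0_top] := inA_top_exists A_p; have [[Va0 [m [Em Hm]]] _] := a0_top.
have B'_i : inB' d P e i i by exists 0; split=> //; exact: contig_chain0.
have [br [r [Er Hr]] br_bottom] := inB'_bottom_exists B'_i.
apply: (inner_path_reroute f_emb i_child Va0 Em Hm (top _ a0_top) Er Hr br_bottom A_no_d B'_no_s1).
case: short_chain => [HA|HB]; [left|right].
- have Ea0 : a0 = p by apply/HA; split=> //; exists m.
  by move: Em; rewrite Ea0 => /iter_child_fix.
- have Ebr : br = i by apply/HB; exists r.
  by move: Er; rewrite Ebr => /iter_child_fix.
Qed.

Theorem theorem11 (P : btree) (e : nat -> bool) (i : nat) :
  (inX P i \/ inY P e i \/ inY' P e i) ->
  vertex P i -> i <> broot P -> e i = false ->
  forall (n : nat) (T : btree),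
    Tn_avoid n P e T <-> Tn_avoid n P (set_contig e i) T.
Proof.
move=> i_XY Vi nr _ n T; rewrite /Tn_avoid /avoids !containsP.
split=> -[size_T avoid]; split=> // -[f f_emb]; apply: avoid.
  by exists f; apply: embedding_relax f_emb => x; rewrite /set_contig; case: eqP.
case: i_XY => [i_X|[i_Y|i_Y']]; [exact: leaf_set_contig f_emb i_X nr |
  exact: inYgen_set_contig f_emb i_Y | exact: inYgen_set_contig f_emb i_Y'].
Qed.
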